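(* Let $(A,B)$ be in canonical form with index set $\mathcal I=\{k_1,\dots,k_m\}$ and controllability index $p$, and let the costs $f_t,g_t$ satisfy the standing assumptions. Define $C:\mathbb R^{mN}\to\mathbb R$ as in the context. Then: (i) $C$ is $\mu_f$-strongly convex and $l_c$-smooth with $l_c=p\,l_f+(p+1)\,l_g\,\|[I_m,\,-A(\mathcal I,:)]\|^2$. (ii) For every $(\mathbf x,\mathbf u)$ with $x_0=0$ and $x_{t+1}=Ax_t+Bu_t$ for $0\le t\le N-1$, setting $z_t=x_t^{\mathcal I}$ ($1\le t\le N$) gives $x_t(\mathbf z)=x_t$, $u_t(\mathbf z)=u_t$ and $C(\mathbf z)=J(\mathbf x,\mathbf u)$. Conversely, for every $\mathbf z\in\mathbb R^{mN}$, the pair $(\mathbf x(\mathbf z),\mathbf u(\mathbf z))$ satisfies $x_{t+1}(\mathbf z)=Ax_t(\mathbf z)+Bu_t(\mathbf z)$, $x_0(\mathbf z)=0$, and $J(\mathbf x(\mathbf z),\mathbf u(\mathbf z))=C(\mathbf z)$. (iii) For each $t$, the stage term $f_t(x_t(\mathbf z))+g_t(u_t(\mathbf z))$ depends only on $z_{t-p+1},\dots,z_{t+1}$.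
   Context: Canonical form: $A\in\mathbb R^{n\times n}$, $B\in\mathbb R^{n\times m}$ are in canonical form if there are indices $0=k_0<k_1<\dots<k_m=n$ such that, with $\mathcal I=\{k_1,\dots,k_m\}$ and $e_i$ the standard basis of $\mathbb R^n$: for every $i\notin\mathcal I$ the $i$-th row of $A$ equals $e_{i+1}^\top$; the rows of $A$ indexed by $\mathcal I$ are arbitrary; the $j$-th column of $B$ is $e_{k_j}$. Put $p_i=k_i-k_{i-1}$ and $p=\max_i p_i$ (the controllability index). $A(\mathcal I,:)\in\mathbb R^{m\times n}$ is the matrix formed by rows $k_1,\dots,k_m$ of $A$; for $x\in\mathbb R^n$, $x^{\mathcal I}=(x^{k_1},\dots,x^{k_m})^\top$; $x^i$ is the $i$-th entry. Problem: dynamics $x_{t+1}=Ax_t+Bu_t$ ($0\le t\le N-1$), $x_0=0$; cost $J(\mathbf x,\mathbf u)=\sum_{t=0}^{N-1}[f_t(x_t)+g_t(u_t)]+f_N(x_N)$, $\mathbf x=(x_1,\dots,x_N)$, $\mathbf u=(u_0,\dots,u_{N-1})$. Standing assumptions: each $f_t:\mathbb R^n\to\mathbb R$ ($0\le t\le N$) is $\mu_f$-strongly convex and $l_f$-smooth (gradient $l_f$-Lipschitz); each $g_t:\mathbb R^m\to\mathbb R$ ($0\le t\le N-1$) is convex and $l_g$-smooth; $\mu_f,l_f,l_g>0$; the minimizers $\theta_t=\arg\min f_t$, $\xi_t=\arg\min g_t$ satisfy $\|\theta_t\|\le\bar\theta$, $\|\xi_t\|\le\bar\xi$. Reparametrization: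 for $\mathbf z=(z_1,\dots,z_N)\in\mathbb R^{mN}$ ($z_t\in\mathbb R^m$, with convention $z_t=0$ for $t\le 0$), set $x_t(\mathbf z)=(z^1_{t-p_1+1},\dots,z^1_t,\ z^2_{t-p_2+1},\dots,z^2_t,\ \dots,\ z^m_{t-p_m+1},\dots,z^m_t)^\top$ for $0\le t\le N$, $u_t(\mathbf z)=z_{t+1}-A(\mathcal I,:)x_t(\mathbf z)$ for $0\le t\le N-1$, and $C(\mathbf z)=\sum_{t=0}^{N}f_t(x_t(\mathbf z))+\sum_{t=0}^{N-1}g_t(u_t(\mathbf z))$. *)

From Stdlib Require Import Reals.
From mathcomp Require Import all_boot.
Set Implicit Arguments. Unset Strict Implicit. Unset Printing Implicit Defensive.
Open Scope R_scope.

Definition vadd (I : Type) (x y : I -> R) : I -> R := fun i => x i + y i.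
Definition vsub (I : Type) (x y : I -> R) : I -> R := fun i => x i - y i.
Definition vscale (I : Type) (a : R) (x : I -> R) : I -> R := fun i => a * x i.
Definition vdot (I : finType) (x y : I -> R) : R := \big[Rplus/0]_(i : I) (x i * y i).
Definition vnorm (I : finType) (x : I -> R) : R := sqrt (vdot x x).
Definition mv (I J : finType) (M : I -> J -> R) (v : J -> R) : I -> R :=
  fun i => \big[Rplus/0]_(j : J) (M i j * v j).

Definition has_gradient (I : finType) (f : (I -> R) -> R) (x g : I -> R) : Prop :=
  forall eps, 0 < eps -> exists delta, 0 < delta /\
    forall h : I -> R, vnorm h < delta ->
      Rabs (f (vadd x h) - f x - vdot g h) <= eps * vnorm h.

Definition smooth (I : finType) (l : R) (f : (I -> R) -> R) : Prop :=
  exists grad : (I -> R) -> (I -> R),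
    (forall x, has_gradient f x (grad x)) /\
    (forall x y, vnorm (vsub (grad x) (grad y)) <= l * vnorm (vsub x y)).

Definition strongly_convex (I : finType) (mu : R) (f : (I -> R) -> R) : Prop :=
  forall (x y : I -> R) (a : R), 0 <= a <= 1 ->
    f (vadd (vscale a x) (vscale (1 - a) y))
      <= a * f x + (1 - a) * f y - mu / 2 * a * (1 - a) * (vnorm (vsub x y)) ^ 2.

Definition convex (I : finType) (f : (I -> R) -> R) : Prop := strongly_convex 0 f.

Definition is_opnorm (I J : finType) (M : I -> J -> R) (c : R) : Prop :=
  is_lub (fun r => exists v : J -> R, vnorm v <= 1 /\ r = vnorm (mv M v)) c.

Definition vat (n : nat) (v : 'I_n -> R) (r : nat) : R :=
  match (insub r : option 'I_n) with Some r' => v r' | None => 0 end.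

(* ---------- Canonical form ----------
   Conventions: k : nat -> nat gives k_0, ..., k_m (1-based row indices as in
   the paper).  Vectors/matrices are indexed 0-based by ordinals, so paper row
   i (1-based) is ordinal i-1.  Index set I = {k_1,...,k_m}. *)

Definition in_I (m : nat) (k : nat -> nat) (r : nat) : bool :=
  has (fun j => k j == r.+1) (iota 1 m).

Definition canonical_form (n m : nat) (k : nat -> nat)
    (A : 'I_n -> 'I_n -> R) (B : 'I_n -> 'I_m -> R) : Prop :=
  [/\ k 0%N = 0%N,
      (forall j, (j < m)%N -> (k j < k j.+1)%N),
      k m = n,
      (forall r c : 'I_n, ~~ in_I m k r ->
          A r c = if (nat_of_ord c == (nat_of_ord r).+1)%N then 1 else 0)
    &
      (forall (r : 'I_n) (j : 'I_m),
          B r j = if ((nat_of_ord r).+1 == k (nat_of_ord j).+1)%N then 1 else 0)].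

Definition pidx (k : nat -> nat) (i : nat) : nat := (k i - k i.-1)%N.
Definition ctrl_index (m : nat) (k : nat -> nat) : nat :=
  \max_(j < m) pidx k j.+1.

Definition restrI (n m : nat) (k : nat -> nat) (x : 'I_n -> R) : 'I_m -> R :=
  fun j => vat x (k (nat_of_ord j).+1).-1.

Definition AI (n m : nat) (k : nat -> nat) (A : 'I_n -> 'I_n -> R) : 'I_m -> 'I_n -> R :=
  fun j c => vat (fun r => A r c) (k (nat_of_ord j).+1).-1.

Definition MIA (n m : nat) (k : nat -> nat) (A : 'I_n -> 'I_n -> R) :
    'I_m -> ('I_m + 'I_n)%type -> R :=
  fun j c => match c with
             | inl j' => if j == j' then 1 else 0
             | inr c' => - AI k A j c'
             end.

(* ---------- Reparametrization ----------
   z in R^{mN} is represented as z : 'I_N * 'I_m -> R, z (t-1, j-1) = z_t^j. *)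

(* z_tau^{j+1} (j 0-based), with z_tau = 0 for tau <= 0 (and out of range) *)
Definition zval (N m : nat) (z : 'I_N * 'I_m -> R) (tau j : nat) : R :=
  match (insub tau.-1 : option 'I_N), (insub j : option 'I_m) with
  | Some a, Some b => if (0 < tau)%N then z (a, b) else 0
  | _, _ => 0
  end.

Definition blk (m : nat) (k : nat -> nat) (r : nat) : nat :=
  find (fun j => (r < k j.+1)%N) (iota 0 m).

(* x_t(z): 0-based row r lies in block j (0-based), i.e. paper rows
   k_j+1..k_{j+1}; position s = r - k_j (0-based) holds
   z^{j+1}_{t - p_{j+1} + 1 + s} = z^{j+1}_{t + r + 1 - k_{j+1}}. *)
Definition xz (n m N : nat) (k : nat -> nat) (z : 'I_N * 'I_m -> R) (t : nat) : 'I_n -> R :=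
  fun r => let j := blk m k r in
           zval z (t + (nat_of_ord r).+1 - k j.+1)%N j.

Definition uz (n m N : nat) (k : nat -> nat) (A : 'I_n -> 'I_n -> R)
    (z : 'I_N * 'I_m -> R) (t : nat) : 'I_m -> R :=
  fun j => zval z t.+1 j - mv (AI k A) (xz k z t) j.

Definition Ccost (n m N : nat) (k : nat -> nat) (A : 'I_n -> 'I_n -> R)
    (f : nat -> ('I_n -> R) -> R) (g : nat -> ('I_m -> R) -> R)
    (z : 'I_N * 'I_m -> R) : R :=
  \big[Rplus/0]_(0 <= t < N.+1) f t (xz k z t)
  + \big[Rplus/0]_(0 <= t < N) g t (uz k A z t).

Definition Jcost (n m N : nat)
    (f : nat -> ('I_n -> R) -> R) (g : nat -> ('I_m -> R) -> R)
    (x : nat -> 'I_n -> R) (u : nat -> 'I_m -> R) : R :=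
  \big[Rplus/0]_(0 <= t < N) (f t (x t) + g t (u t)) + f N (x N).

Definition zI (n m N : nat) (k : nat -> nat) (x : nat -> 'I_n -> R) : 'I_N * 'I_m -> R :=
  fun tj => restrI k (x (nat_of_ord tj.1).+1) tj.2.

(* The map z |-> (x(z), u(z)) is linear: x_t(z) = X_t z and
   u_t(z) = [I_m, -A(I,:)] (z_{t+1}; x_t(z)) = U_t z.  Hence
   C(z) = sum_t f_t (X_t z) + sum_t g_t (U_t z), and part (i) follows from two
   general facts about functions of the form z |-> sum_t F_t (M_t z):
   - if every F_t is l-smooth and sum_t |M_t w|^2 <= K |w|^2, the sum is
     (l K)-smooth (its gradient is sum_t M_t^T grad F_t (M_t z));
   - if every F_t is mu-strongly convex and sum_t |M_t w|^2 >= c |w|^2, the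
     sum is (mu c)-strongly convex.
   The required "energy" bounds come from the block structure of x_t(z):
   every coordinate z_tau^j occurs in x_0(z), ..., x_N(z) at most p times and
   at least once (in row k_j of x_tau(z)), so |w|^2 <= sum_t |X_t w|^2 <= p |w|^2,
   and then sum_t |U_t w|^2 <= |[I, -A(I,:)]|^2 (|w|^2 + p |w|^2).
   Part (ii) expresses that in canonical form the rows outside I shift the
   state upwards inside each block, while row k_j receives the input; part
   (iii) is read off the indices occurring in x_t(z) and u_t(z). *)

From HB Require Import structures.
From Stdlib Require Import Reals Lra Lia FunctionalExtensionality ClassicalEpsilon.
From mathcomp Require Import all_boot zify.
Open Scope R_scope.
Set Implicit Arguments. Unset Strict Implicit.

(* (R, +, 0) and (R, *, 1) as monoid laws, so that the generic bigop lemmas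
   (splitting, distributivity, exchange of sums) apply to \big[Rplus/0]. *)
Lemma Rplus_assoc_law : associative Rplus. Proof. by move=> *; ring. Qed.
Lemma Rmult_assoc_law : associative Rmult. Proof. by move=> *; ring. Qed.
HB.instance Definition _ :=
  Monoid.isComLaw.Build R 0 Rplus Rplus_assoc_law Rplus_comm Rplus_0_l.
HB.instance Definition _ :=
  Monoid.isComLaw.Build R 1 Rmult Rmult_assoc_law Rmult_comm Rmult_1_l.
HB.instance Definition _ := Monoid.isMulLaw.Build R 0 Rmult Rmult_0_l Rmult_0_r.
HB.instance Definition _ :=
  Monoid.isAddLaw.Build R Rmult Rplus Rmult_plus_distr_r Rmult_plus_distr_l.

Lemma sumR_le (I : Type) (r : seq I) (P : pred I) (F G : I -> R) :
  (forall i, P i -> F i <= G i) ->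
  \big[Rplus/0]_(i <- r | P i) F i <= \big[Rplus/0]_(i <- r | P i) G i.
Proof. by move=> H; apply: (big_ind2 (fun a b => a <= b)) => // *; lra. Qed.

Lemma sumR_le_nat (a b : nat) (F G : nat -> R) :
  (forall i, (a <= i < b)%N -> F i <= G i) ->
  \big[Rplus/0]_(a <= i < b) F i <= \big[Rplus/0]_(a <= i < b) G i.
Proof.
move=> H; rewrite big_nat_cond [X in _ <= X]big_nat_cond.
by apply: sumR_le => i /andP [Hi _]; apply: H.
Qed.

Lemma sumR_ge0 (I : Type) (r : seq I) (P : pred I) (F : I -> R) :
  (forall i, P i -> 0 <= F i) -> 0 <= \big[Rplus/0]_(i <- r | P i) F i.
Proof. by move=> H; apply: (big_ind (fun a => 0 <= a)) => // *; lra. Qed.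

Lemma sumR_opp (I : Type) (r : seq I) (P : pred I) (F : I -> R) :
  \big[Rplus/0]_(i <- r | P i) (- F i) = - \big[Rplus/0]_(i <- r | P i) F i.
Proof. by apply: (big_ind2 (fun a b => a = - b)) => // *; lra. Qed.

Lemma sumR_sub (I : Type) (r : seq I) (P : pred I) (F G : I -> R) :
  \big[Rplus/0]_(i <- r | P i) (F i - G i) =
  \big[Rplus/0]_(i <- r | P i) F i - \big[Rplus/0]_(i <- r | P i) G i.
Proof. by rewrite /Rminus big_split sumR_opp. Qed.

Lemma sumR_delta (I : finType) (z : I -> R) (x : I) :
  \big[Rplus/0]_c ((if x == c then 1 else 0) * z c) = z x.
Proof.
rewrite (bigD1 x) //= eqxx big1 ?Rplus_0_r ?Rmult_1_l //.
by move=> c; rewrite eq_sym => /negbTE ->; rewrite Rmult_0_l.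
Qed.

Lemma sumR_const_nat (a b : nat) (c : R) :
  \big[Rplus/0]_(a <= i < b) c = INR (b - a) * c.
Proof.
rewrite big_const_nat; elim: (b - a)%N => [|d IH]; first by rewrite /=; ring.
by rewrite iterS IH S_INR; ring.
Qed.

Lemma sumR_delay_le (G : nat -> R) (d L : nat) :
  (forall t, 0 <= G t) -> G 0%N = 0 ->
  \big[Rplus/0]_(0 <= t < L) G (t - d)%N <= \big[Rplus/0]_(0 <= t < L) G t.
Proof.
move=> G_ge0 G0; elim: d L => [|d IH] L.
  by apply: sumR_le => t _; rewrite subn0; lra.
case: L => [|L]; first by rewrite !big_geq //; lra.
rewrite big_nat_recl // sub0n G0 Rplus_0_l.
under eq_bigr do rewrite subSS.
apply: Rle_trans (IH L) _.
by rewrite [X in _ <= X]big_nat_recr //=; have := G_ge0 L; lra.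
Qed.

Lemma sumR_lin3 (L : nat) (F G H : nat -> R) (a b c : R) :
  \big[Rplus/0]_(0 <= t < L) (a * F t + b * G t - c * H t) =
  a * \big[Rplus/0]_(0 <= t < L) F t + b * \big[Rplus/0]_(0 <= t < L) G t
  - c * \big[Rplus/0]_(0 <= t < L) H t.
Proof. by rewrite sumR_sub big_split /= !big_distrr. Qed.

Lemma vdot_ge0 (I : finType) (x : I -> R) : 0 <= vdot x x.
Proof. by apply: sumR_ge0 => i _; nra. Qed.

Lemma vnorm_ge0 (I : finType) (x : I -> R) : 0 <= vnorm x.
Proof. exact: sqrt_pos. Qed.

Lemma vnorm_sq (I : finType) (x : I -> R) : vnorm x ^ 2 = vdot x x.
Proof. by rewrite /vnorm /= Rmult_1_r sqrt_sqrt //; apply: vdot_ge0. Qed.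

Lemma vnorm_mul (I : finType) (x : I -> R) : vnorm x * vnorm x = vdot x x.
Proof. by rewrite -vnorm_sq /=; ring. Qed.

Lemma le_of_sq_le (a b : R) : 0 <= b -> a * a <= b * b -> a <= b.
Proof. by move=> *; nra. Qed.

Lemma le_of_mul_le (a b : R) : 0 <= b -> a * a <= b * a -> a <= b.
Proof.
move=> b0 H; case: (Rle_or_lt a b) => // ba.
by have := Rmult_lt_compat_r a _ _ ltac:(lra) ba; lra.
Qed.

Lemma vdot_sq_le (I : finType) (x y : I -> R) : vdot x y ^ 2 <= vdot x x * vdot y y.
Proof.
set a := vdot y y; set b := vdot x y; set c := vdot x x.
have quad t : 0 <= c + 2 * t * b + t ^ 2 * a.
  have -> : c + 2 * t * b + t ^ 2 * a =
            vdot (fun i => x i + t * y i) (fun i => x i + t * y i).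
    rewrite /c /b /a /vdot !big_distrr -!big_split /=.
    by apply: eq_bigr => i _; ring.
  exact: vdot_ge0.
have a0 : 0 <= a by apply: vdot_ge0.
case: (Req_dec a 0) => Ha.
  case: (Req_dec b 0) => Hb; first by rewrite Hb Ha; lra.
  have := quad (- (c + 1) / (2 * b)); rewrite Ha.
  have -> : c + 2 * (- (c + 1) / (2 * b)) * b + (- (c + 1) / (2 * b)) ^ 2 * 0 = -1.
    by field.
  lra.
have := quad (- b / a).
have -> : c + 2 * (- b / a) * b + (- b / a) ^ 2 * a = (c * a - b ^ 2) / a by field.
have a_pos : 0 < a by lra.
move=> H; have : 0 <= (c * a - b ^ 2) / a * a by apply: Rmult_le_pos; lra.
have -> : (c * a - b ^ 2) / a * a = c * a - b ^ 2 by field; lra.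
lra.
Qed.

Lemma vdot_le (I : finType) (x y : I -> R) : vdot x y <= vnorm x * vnorm y.
Proof.
apply: le_of_sq_le; first by apply: Rmult_le_pos; apply: vnorm_ge0.
have := vdot_sq_le x y; rewrite -!vnorm_mul /=; nra.
Qed.

Lemma vnorm_triangle (I : finType) (x y : I -> R) :
  vnorm (vadd x y) <= vnorm x + vnorm y.
Proof.
apply: le_of_sq_le; first by have := vnorm_ge0 x; have := vnorm_ge0 y; lra.
have -> : vnorm (vadd x y) * vnorm (vadd x y) = vdot x x + 2 * vdot x y + vdot y y.
  rewrite vnorm_mul /vdot /vadd big_distrr -!big_split /=.
  by apply: eq_bigr => i _; ring.
have := vdot_le x y; rewrite -!vnorm_mul; nra.
Qed.

Lemma vnorm_scale (I : finType) (a : R) (x : I -> R) :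
  vnorm (vscale a x) = Rabs a * vnorm x.
Proof.
rewrite /vnorm -sqrt_Rsqr_abs -sqrt_mult; [|exact: Rle_0_sqr|exact: vdot_ge0].
congr sqrt; rewrite /vdot big_distrr.
by apply: eq_bigr => i _ /=; rewrite /vscale /Rsqr; ring.
Qed.

Lemma vnorm_eq0 (I : finType) (v : I -> R) : vnorm v = 0 -> forall i, v i = 0.
Proof.
move=> Hv i; have : v i * v i <= vdot v v.
  rewrite /vdot (bigD1 i) //=.
  have : 0 <= \big[Rplus/0]_(j | j != i) (v j * v j) by apply: sumR_ge0 => j _; nra.
  lra.
by rewrite -vnorm_mul Hv; nra.
Qed.

Definition mvT (I J : finType) (M : I -> J -> R) (y : I -> R) : J -> R :=
  fun j => \big[Rplus/0]_(i : I) (M i j * y i).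

Lemma vdot_mv (I J : finType) (M : I -> J -> R) (y : I -> R) (h : J -> R) :
  vdot y (mv M h) = vdot (mvT M y) h.
Proof.
rewrite /vdot /mv /mvT.
under eq_bigr do rewrite big_distrr.
under [RHS]eq_bigr do rewrite big_distrl.
by rewrite exchange_big /=; apply: eq_bigr => j _; apply: eq_bigr => i _ /=; ring.
Qed.

Lemma mv_lin (I J : finType) (M : I -> J -> R) (a b : R) (x y : J -> R) :
  mv M (vadd (vscale a x) (vscale b y)) = vadd (vscale a (mv M x)) (vscale b (mv M y)).
Proof.
apply: functional_extensionality => i; rewrite /mv /vadd /vscale !big_distrr -big_split.
by apply: eq_bigr => j _ /=; ring.
Qed.

Lemma mv_add (I J : finType) (M : I -> J -> R) (x y : J -> R) :
  mv M (vadd x y) = vadd (mv M x) (mv M y).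
Proof.
apply: functional_extensionality => i; rewrite /mv /vadd -big_split.
by apply: eq_bigr => j _ /=; ring.
Qed.

Lemma mv_sub (I J : finType) (M : I -> J -> R) (x y : J -> R) :
  mv M (vsub x y) = vsub (mv M x) (mv M y).
Proof.
apply: functional_extensionality => i; rewrite /mv /vsub -sumR_sub.
by apply: eq_bigr => j _ /=; ring.
Qed.

(* Every matrix is a bounded operator (Frobenius bound). *)
Lemma mv_bounded (I J : finType) (M : I -> J -> R) :
  exists c, 0 <= c /\ forall h, vnorm (mv M h) <= c * vnorm h.
Proof.
set F := \big[Rplus/0]_i vdot (M i) (M i).
have F0 : 0 <= F by apply: sumR_ge0 => i _; apply: vdot_ge0.
exists (sqrt F); split => [|h]; first exact: sqrt_pos.
apply: le_of_sq_le; first by apply: Rmult_le_pos; [apply: sqrt_pos|apply: vnorm_ge0].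
have -> : sqrt F * vnorm h * (sqrt F * vnorm h) = F * vdot h h.
  by rewrite -vnorm_mul -{3}(sqrt_sqrt _ F0); ring.
rewrite vnorm_mul /vdot big_distrl /=; apply: sumR_le => i _.
by have := vdot_sq_le (M i) h; rewrite /vdot /mv /=; lra.
Qed.

Lemma opnorm_bound (I J : finType) (M : I -> J -> R) (c : R) :
  is_opnorm M c -> forall v, vnorm (mv M v) <= c * vnorm v.
Proof.
move=> [Hub _] v.
case: (Rle_lt_or_eq_dec 0 (vnorm v) (vnorm_ge0 v)) => Hv; last first.
  have -> : mv M v = fun _ => 0.
    apply: functional_extensionality => j.
    by rewrite /mv big1 // => i _; rewrite (vnorm_eq0 (esym Hv)); ring.
  rewrite -Hv Rmult_0_r; apply: Req_le.
  by rewrite /vnorm /vdot big1 ?sqrt_0 // => i _; ring.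
have inv_pos : 0 <= / vnorm v by apply: Rlt_le; apply: Rinv_0_lt_compat.
have unit : vnorm (vscale (/ vnorm v) v) <= 1.
  by rewrite vnorm_scale Rabs_pos_eq // Rinv_l; lra.
have scaled : mv M (vscale (/ vnorm v) v) = vscale (/ vnorm v) (mv M v).
  apply: functional_extensionality => i.
  by rewrite /mv /vscale big_distrr; apply: eq_bigr => j _ /=; ring.
have := Hub _ (ex_intro _ _ (conj unit erefl)).
rewrite scaled vnorm_scale Rabs_pos_eq // => H.
have := Rmult_le_compat_l (vnorm v) _ _ (vnorm_ge0 v) H.
by rewrite -Rmult_assoc Rinv_r; lra.
Qed.

Lemma sum_mul_le (L : nat) (a b : nat -> R) (K u v : R) :
  0 <= K -> 0 <= u -> 0 <= v ->
  \big[Rplus/0]_(0 <= t < L) a t ^ 2 <= K * u ^ 2 ->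
  \big[Rplus/0]_(0 <= t < L) b t ^ 2 <= K * v ^ 2 ->
  \big[Rplus/0]_(0 <= t < L) (a t * b t) <= K * u * v.
Proof.
move=> K0 u0 v0 Ha Hb.
have as_vdot (c : nat -> R) :
    \big[Rplus/0]_(0 <= t < L) c t ^ 2 = vdot (fun i : 'I_L => c i) (fun i => c i).
  by rewrite big_mkord; apply: eq_bigr => i _ /=; ring.
have -> : \big[Rplus/0]_(0 <= t < L) (a t * b t) =
          vdot (fun i : 'I_L => a i) (fun i : 'I_L => b i) by rewrite big_mkord.
rewrite !as_vdot in Ha Hb.
have CS := vdot_sq_le (fun i : 'I_L => a i) (fun i : 'I_L => b i).
have A0 := vdot_ge0 (fun i : 'I_L => a i).
have B0 := vdot_ge0 (fun i : 'I_L => b i).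
have := Rmult_le_compat _ _ _ _ A0 B0 Ha Hb => AB.
apply: le_of_sq_le; first by apply: Rmult_le_pos; [apply: Rmult_le_pos|].
by simpl in *; nra.
Qed.

Lemma has_gradient_ext (I : finType) (f1 f2 : (I -> R) -> R) (x g1 g2 : I -> R) :
  (forall y, f1 y = f2 y) -> (forall i, g1 i = g2 i) ->
  has_gradient f1 x g1 -> has_gradient f2 x g2.
Proof.
move=> E1 E2; have -> : f1 = f2 by apply: functional_extensionality.
by have -> : g1 = g2 by apply: functional_extensionality.
Qed.

Lemma has_gradient_add (I : finType) (f1 f2 : (I -> R) -> R) (x g1 g2 : I -> R) :
  has_gradient f1 x g1 -> has_gradient f2 x g2 ->
  has_gradient (fun y => f1 y + f2 y) x (vadd g1 g2).
Proof.
move=> H1 H2 eps He.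
have [d1 [d1p Hd1]] := H1 (eps / 2) ltac:(lra).
have [d2 [d2p Hd2]] := H2 (eps / 2) ltac:(lra).
exists (Rmin d1 d2); split; first exact: Rmin_glb_lt.
move=> h Hh.
have := Hd1 h (Rlt_le_trans _ _ _ Hh (Rmin_l _ _)).
have := Hd2 h (Rlt_le_trans _ _ _ Hh (Rmin_r _ _)).
have -> : vdot (vadd g1 g2) h = vdot g1 h + vdot g2 h.
  by rewrite /vdot -big_split; apply: eq_bigr => i _ /=; rewrite /vadd; ring.
set a := f1 (vadd x h) - f1 x - vdot g1 h.
set b := f2 (vadd x h) - f2 x - vdot g2 h.
have -> : f1 (vadd x h) + f2 (vadd x h) - (f1 x + f2 x) - (vdot g1 h + vdot g2 h) = a + b.
  by rewrite /a /b; ring.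
by move=> Hb Ha; have := Rabs_triang a b; lra.
Qed.

Lemma has_gradient_sum (I : finType) (F : nat -> (I -> R) -> R) (G : nat -> I -> R)
    (x : I -> R) (L : nat) :
  (forall t, (t < L)%N -> has_gradient (F t) x (G t)) ->
  has_gradient (fun y => \big[Rplus/0]_(0 <= t < L) F t y) x
               (fun i => \big[Rplus/0]_(0 <= t < L) G t i).
Proof.
elim: L => [|L IH] H.
  move=> eps He; exists 1; split => [|h _]; first lra.
  have -> : vdot (fun i => \big[Rplus/0]_(0 <= t < 0) G t i) h = 0.
    by rewrite /vdot big1 // => i _; rewrite big_geq //; ring.
  rewrite !big_geq // !Rminus_0_r Rabs_R0; apply: Rmult_le_pos; [lra|apply: vnorm_ge0].
apply: (has_gradient_ext
          (f1 := fun y => \big[Rplus/0]_(0 <= t < L) F t y + F L y)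
          (g1 := vadd (fun i => \big[Rplus/0]_(0 <= t < L) G t i) (G L))).
- by move=> y; rewrite big_nat_recr.
- by move=> i; rewrite big_nat_recr.
apply: has_gradient_add; last exact: H.
by apply: IH => t Ht; apply: H; lia.
Qed.

Lemma has_gradient_comp (I J : finType) (M : I -> J -> R) (f : (I -> R) -> R)
    (z : J -> R) (g : I -> R) :
  has_gradient f (mv M z) g -> has_gradient (fun y => f (mv M y)) z (mvT M g).
Proof.
move=> H eps He.
have [c [c0 Hc]] := mv_bounded M.
have [d [dp Hd]] := H (eps / (c + 1)) ltac:(apply: Rdiv_lt_0_compat; lra).
exists (d / (c + 1)); split; first by apply: Rdiv_lt_0_compat; lra.
move=> h Hh.
have Mh_small : vnorm (mv M h) < d.
  have : (c + 1) * vnorm h < d.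
    have -> : d = (c + 1) * (d / (c + 1)) by field; lra.
    by apply: Rmult_lt_compat_l; lra.
  by have := Hc h; have := vnorm_ge0 h; nra.
apply: Rle_trans; first by rewrite /= mv_add -vdot_mv; apply: Hd.
have -> : eps * vnorm h = eps / (c + 1) * ((c + 1) * vnorm h) by field; lra.
apply: Rmult_le_compat_l; first by apply: Rlt_le; apply: Rdiv_lt_0_compat; lra.
by have := Hc h; have := vnorm_ge0 h; nra.
Qed.

Lemma smooth_gradients (I : finType) (L : nat) (l : R) (F : nat -> (I -> R) -> R) :
  (forall t, (t < L)%N -> smooth l (F t)) ->
  exists G : nat -> (I -> R) -> (I -> R), forall t, (t < L)%N ->
    (forall x, has_gradient (F t) x (G t x)) /\
    (forall x y, vnorm (vsub (G t x) (G t y)) <= l * vnorm (vsub x y)).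
Proof.
move=> H.
have H' t : exists G : (I -> R) -> (I -> R), (t < L)%N ->
    (forall x, has_gradient (F t) x (G x)) /\
    (forall x y, vnorm (vsub (G x) (G y)) <= l * vnorm (vsub x y)).
  case: (ltnP t L) => Ht; last by exists (fun _ _ => 0) => Ht'; lia.
  by have [G HG] := H t Ht; exists G.
exists (fun t => proj1_sig (constructive_indefinite_description _ (H' t))).
by move=> t; apply: (proj2_sig (constructive_indefinite_description _ (H' t))).
Qed.

Lemma smooth_add (I : finType) (l1 l2 : R) (f1 f2 : (I -> R) -> R) :
  smooth l1 f1 -> smooth l2 f2 -> smooth (l1 + l2) (fun z => f1 z + f2 z).
Proof.
move=> [G1 [HG1 L1]] [G2 [HG2 L2]].
exists (fun x => vadd (G1 x) (G2 x)); split => [x|x y]; first exact: has_gradient_add.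
have -> : vsub (vadd (G1 x) (G2 x)) (vadd (G1 y) (G2 y)) =
          vadd (vsub (G1 x) (G1 y)) (vsub (G2 x) (G2 y)).
  by apply: functional_extensionality => i; rewrite /vsub /vadd; ring.
by apply: Rle_trans (vnorm_triangle _ _) _; have := L1 x y; have := L2 x y; lra.
Qed.

Lemma sconvex_add (I : finType) (mu1 mu2 : R) (f1 f2 : (I -> R) -> R) :
  strongly_convex mu1 f1 -> strongly_convex mu2 f2 ->
  strongly_convex (mu1 + mu2) (fun z => f1 z + f2 z).
Proof. by move=> H1 H2 x y a Ha; have := H1 x y a Ha; have := H2 x y a Ha; lra. Qed.

Lemma smooth_sum_comp (I J : finType) (L : nat) (l K : R)
    (F : nat -> (I -> R) -> R) (M : nat -> I -> J -> R) :
  0 <= l -> 0 <= K ->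
  (forall t, (t < L)%N -> smooth l (F t)) ->
  (forall w, \big[Rplus/0]_(0 <= t < L) vnorm (mv (M t) w) ^ 2 <= K * vnorm w ^ 2) ->
  smooth (l * K) (fun z => \big[Rplus/0]_(0 <= t < L) F t (mv (M t) z)).
Proof.
move=> l0 K0 HF energy.
have [G HG] := smooth_gradients HF.
pose DG t z z' := vsub (G t (mv (M t) z)) (G t (mv (M t) z')).
exists (fun z c => \big[Rplus/0]_(0 <= t < L) mvT (M t) (G t (mv (M t) z)) c).
split=> [z|z z'].
  by apply: has_gradient_sum => t Ht; apply: has_gradient_comp; apply: (HG t Ht).1.
set D := vsub _ _; set w := vsub z z'.
have D_sum : D = fun c => \big[Rplus/0]_(0 <= t < L) mvT (M t) (DG t z z') c.
  apply: functional_extensionality => c; rewrite /D /vsub -sumR_sub.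
  by apply: eq_bigr => t _; rewrite /mvT -sumR_sub; apply: eq_bigr => i _; rewrite /DG /vsub; ring.
have DD : vdot D D = \big[Rplus/0]_(0 <= t < L) vdot (DG t z z') (mv (M t) D).
  have -> : vdot D D = \big[Rplus/0]_(0 <= t < L) vdot (mvT (M t) (DG t z z')) D.
    rewrite {1}D_sum /vdot; under eq_bigr do rewrite big_distrl.
    by rewrite exchange_big.
  by apply: eq_bigr => t _; rewrite vdot_mv.
have termwise t : (0 <= t < L)%N -> vdot (DG t z z') (mv (M t) D) <=
    l * (vnorm (mv (M t) w) * vnorm (mv (M t) D)).
  move=> /andP [_ Ht]; apply: Rle_trans (vdot_le _ _) _.
  rewrite -Rmult_assoc /w mv_sub; apply: Rmult_le_compat_r; first exact: vnorm_ge0.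
  exact: (HG t Ht).2.
have bound : vnorm D * vnorm D <= l * K * vnorm w * vnorm D.
  rewrite vnorm_mul DD; apply: Rle_trans (sumR_le_nat termwise) _.
  rewrite -big_distrr /= !Rmult_assoc; apply: Rmult_le_compat_l => //.
  rewrite -Rmult_assoc; apply: sum_mul_le => //; apply: vnorm_ge0.
apply: le_of_mul_le => //.
by apply: Rmult_le_pos; [apply: Rmult_le_pos|apply: vnorm_ge0].
Qed.

Lemma sconvex_sum_comp (I J : finType) (L : nat) (mu c : R)
    (F : nat -> (I -> R) -> R) (M : nat -> I -> J -> R) :
  0 <= mu ->
  (forall t, (t < L)%N -> strongly_convex mu (F t)) ->
  (forall w, c * vnorm w ^ 2 <= \big[Rplus/0]_(0 <= t < L) vnorm (mv (M t) w) ^ 2) ->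
  strongly_convex (mu * c) (fun z => \big[Rplus/0]_(0 <= t < L) F t (mv (M t) z)).
Proof.
move=> mu0 HF energy x y a Ha.
set coef := mu / 2 * a * (1 - a).
have coef0 : 0 <= coef by rewrite /coef; apply: Rmult_le_pos; [apply: Rmult_le_pos|]; lra.
have termwise : \big[Rplus/0]_(0 <= t < L) F t (mv (M t) (vadd (vscale a x) (vscale (1 - a) y)))
    <= \big[Rplus/0]_(0 <= t < L) (a * F t (mv (M t) x) + (1 - a) * F t (mv (M t) y)
                                   - coef * vnorm (mv (M t) (vsub x y)) ^ 2).
  by apply: sumR_le_nat => t Ht; rewrite mv_lin mv_sub; apply: HF.
rewrite sumR_lin3 in termwise.
have := Rmult_le_compat_l _ _ _ coef0 (energy (vsub x y)).
by rewrite /coef in termwise *; nra.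
Qed.

Section BlockIndices.
Variables (m : nat) (k : nat -> nat).
Hypothesis kinc : forall j, (j < m)%N -> (k j < k j.+1)%N.

Lemma k_mono i i' : (i <= i' <= m)%N -> (k i <= k i')%N.
Proof.
elim: i' => [|i' IH] H; first by have -> : i = 0%N by lia.
case: (leqP i i') => Hi; last by have -> : i = i'.+1 by lia.
by have := IH ltac:(lia); have := @kinc i' ltac:(lia); lia.
Qed.

Lemma k_strict i i' : (i < i' <= m)%N -> (k i < k i')%N.
Proof. by move=> H; have := @kinc i ltac:(lia); have := @k_mono i.+1 i' ltac:(lia); lia. Qed.

Lemma k_inj (j j' : 'I_m) : (k j.+1 == k j'.+1)%N = (j == j').
Proof.
case: (eqVneq j j') => [->|]; first by rewrite eqxx.
rewrite -val_eqE /= => Hne; apply/negbTE.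
have := ltn_ord j; have := ltn_ord j'.
case: (ltngtP j j') => H Hj' Hj; last by rewrite H eqxx in Hne.
- by have := @k_strict j.+1 j'.+1 ltac:(lia); lia.
- by have := @k_strict j'.+1 j.+1 ltac:(lia); lia.
Qed.

Lemma blk_eq r j : (j < m)%N -> (k j <= r < k j.+1)%N -> blk m k r = j.
Proof.
move=> Hj Hr; rewrite /blk.
have -> : iota 0 m = iota 0 j ++ iota j (m - j) by rewrite -iotaD; congr iota; lia.
rewrite find_cat.
have -> : has (fun i => (r < k i.+1)%N) (iota 0 j) = false.
  apply/negbTE/hasPn => i; rewrite mem_iota => Hi.
  by have := @k_mono i.+1 j ltac:(lia); lia.
rewrite size_iota; have -> : (m - j = (m - j).-1.+1)%N by lia.
by rewrite /= ifT ?addn0 //; lia.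
Qed.

Lemma in_IP r : reflect (exists j, (1 <= j <= m)%N /\ k j = r.+1) (in_I m k r).
Proof.
apply: (iffP hasP) => [[j Hj /eqP Hk]|[j [Hj Hk]]].
  by exists j; split => //; move: Hj; rewrite mem_iota; lia.
by exists j; [rewrite mem_iota; lia|apply/eqP].
Qed.

Lemma notin_I r j : (j < m)%N -> (k j < r.+1 < k j.+1)%N -> ~~ in_I m k r.
Proof.
move=> Hj Hr; apply/in_IP => -[j' [Hj' E]].
case: (ltngtP j' j.+1) => H.
- by have := @k_mono j' j ltac:(lia); lia.
- by have := @k_mono j.+1 j' ltac:(lia); lia.
- by subst j'; lia.
Qed.

Lemma block_size_le j : (j < m)%N -> (k j.+1 - k j <= ctrl_index m k)%N.
Proof.
move=> Hj; have := leq_bigmax (F := fun j : 'I_m => pidx k j.+1) (Ordinal Hj).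
by rewrite /ctrl_index /pidx.
Qed.

Hypothesis k0 : k 0%N = 0%N.

Lemma blk_spec r : (r < k m)%N ->
  (blk m k r < m)%N /\ (k (blk m k r) <= r < k (blk m k r).+1)%N.
Proof.
move=> Hr.
suff [j [Hj Hjr]] : exists j, (j < m)%N /\ (k j <= r < k j.+1)%N.
  by rewrite (blk_eq Hj Hjr).
suff H i : (i <= m)%N -> (r < k i)%N ->
    exists j, (j < i)%N /\ (k j <= r < k j.+1)%N by exact: H m (leqnn m) Hr.
elim: i => [|i IH] Hi Hri; first by rewrite k0 in Hri.
case: (ltnP r (k i)) => H; last by exists i; split => //; lia.
by have [j [Hj Hjr]] := IH ltac:(lia) H; exists j; split => //; lia.
Qed.

Lemma sum_blocks (F : nat -> R) i : (i <= m)%N ->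
  \big[Rplus/0]_(0 <= r < k i) F r =
  \big[Rplus/0]_(0 <= j < i) \big[Rplus/0]_(k j <= r < k j.+1) F r.
Proof.
elim: i => [|i IH] Hi; first by rewrite k0 !big_geq.
rewrite big_nat_recr //= -IH; last lia.
by rewrite -big_cat_nat //; have := @kinc i ltac:(lia); lia.
Qed.

End BlockIndices.

Lemma zval_0 (N m : nat) (z : 'I_N * 'I_m -> R) (j : nat) : zval z 0 j = 0.
Proof. by rewrite /zval; case: (insub 0.-1 : option 'I_N); case: (insub j : option 'I_m). Qed.

Lemma zval_ord (N m : nat) (z : 'I_N * 'I_m -> R) (a : 'I_N) (b : 'I_m) :
  zval z a.+1 b = z (a, b).
Proof. by rewrite /zval /= !valK. Qed.

Definition chan_energy (N m : nat) (w : 'I_N * 'I_m -> R) (j : nat) : R :=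
  \big[Rplus/0]_(0 <= tau < N.+1) zval w tau j ^ 2.

Lemma chan_energy_ge0 (N m : nat) (w : 'I_N * 'I_m -> R) (j : nat) : 0 <= chan_energy w j.
Proof. by apply: sumR_ge0 => t _; nra. Qed.

Lemma chan_energyE (N m : nat) (w : 'I_N * 'I_m -> R) (b : 'I_m) :
  chan_energy w b = \big[Rplus/0]_(0 <= t < N) zval w t.+1 b ^ 2.
Proof. by rewrite /chan_energy big_nat_recl // zval_0 /= Rmult_0_l Rplus_0_l. Qed.

Lemma vdot_chan_energy (N m : nat) (w : 'I_N * 'I_m -> R) :
  vdot w w = \big[Rplus/0]_(0 <= j < m) chan_energy w j.
Proof.
rewrite big_mkord; under [RHS]eq_bigr do rewrite chan_energyE big_mkord.
rewrite exchange_big pair_bigA /vdot; apply: eq_bigr => -[a b] _ /=.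
by rewrite zval_ord; ring.
Qed.

Lemma vdot_next_inputs (N m : nat) (w : 'I_N * 'I_m -> R) :
  \big[Rplus/0]_(0 <= t < N) vdot (fun j : 'I_m => zval w t.+1 j) (fun j => zval w t.+1 j)
  = vdot w w.
Proof.
rewrite vdot_chan_energy [RHS]big_mkord.
under [RHS]eq_bigr do rewrite chan_energyE.
by rewrite exchange_big /vdot; apply: eq_bigr => t _; apply: eq_bigr => j _ /=; ring.
Qed.

Definition ebas (I : finType) (c : I) : I -> R := fun c' => if c' == c then 1 else 0.

Definition linear_form (I : finType) (phi : (I -> R) -> R) : Prop :=
  forall z, phi z = \big[Rplus/0]_(c : I) (z c * phi (ebas c)).

Lemma linear_form_zval (N m tau j : nat) :
  linear_form (fun z : 'I_N * 'I_m -> R => zval z tau j).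
Proof.
move=> z; rewrite /zval.
case: (insub tau.-1 : option 'I_N) => [a|]; last by rewrite big1 // => c _; ring.
case: (insub j : option 'I_m) => [b|]; last by rewrite big1 // => c _; ring.
case: (0 < tau)%N; last by rewrite big1 // => c _; ring.
by rewrite -[LHS](sumR_delta z (a, b)); apply: eq_bigr => c _; rewrite /ebas eq_sym Rmult_comm.
Qed.

Lemma linear_form_comb (I J : finType) (phi : (I -> R) -> R)
    (psi : J -> (I -> R) -> R) (a : J -> R) :
  linear_form phi -> (forall r, linear_form (psi r)) ->
  linear_form (fun z => phi z - \big[Rplus/0]_(r : J) (a r * psi r z)).
Proof.
move=> Hphi Hpsi z /=.
under [RHS]eq_bigr do rewrite Rmult_minus_distr_l.
rewrite sumR_sub -Hphi; congr (_ - _).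
under [RHS]eq_bigr do rewrite big_distrr.
rewrite exchange_big /=; apply: eq_bigr => r _.
by rewrite (Hpsi r z) big_distrr /=; apply: eq_bigr => c _; ring.
Qed.

Lemma linear_form_mv (I J : finType) (L : (I -> R) -> (J -> R)) :
  (forall j, linear_form (fun z => L z j)) ->
  forall z, L z = mv (fun j c => L (ebas c) j) z.
Proof.
move=> H z; apply: functional_extensionality => j; rewrite (H j z) /mv.
by apply: eq_bigr => c _; ring.
Qed.

Definition Xmat (n m N : nat) (k : nat -> nat) (t : nat) : 'I_n -> ('I_N * 'I_m) -> R :=
  fun r c => @xz n m N k (ebas c) t r.

Definition Umat (n m N : nat) (k : nat -> nat) (A : 'I_n -> 'I_n -> R) (t : nat) :
    'I_m -> ('I_N * 'I_m) -> R :=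
  fun j c => @uz n m N k A (ebas c) t j.

Lemma xz_linear (n m N : nat) (k : nat -> nat) (z : 'I_N * 'I_m -> R) (t : nat) :
  @xz n m N k z t = mv (@Xmat n m N k t) z.
Proof. by apply: (linear_form_mv (L := fun z => @xz n m N k z t)) => r; apply: linear_form_zval. Qed.

Lemma uz_linear (n m N : nat) (k : nat -> nat) (A : 'I_n -> 'I_n -> R)
    (z : 'I_N * 'I_m -> R) (t : nat) :
  @uz n m N k A z t = mv (@Umat n m N k A t) z.
Proof.
apply: (linear_form_mv (L := fun z => @uz n m N k A z t)) => j.
by apply: linear_form_comb => [|r]; apply: linear_form_zval.
Qed.

Lemma CcostE (n m N : nat) (k : nat -> nat) (A : 'I_n -> 'I_n -> R)
    (f : nat -> ('I_n -> R) -> R) (g : nat -> ('I_m -> R) -> R) :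
  @Ccost n m N k A f g =
  (fun z => \big[Rplus/0]_(0 <= t < N.+1) f t (mv (@Xmat n m N k t) z)
          + \big[Rplus/0]_(0 <= t < N) g t (mv (@Umat n m N k A t) z)).
Proof.
apply: functional_extensionality => z; rewrite /Ccost.
by congr (_ + _); apply: eq_bigr => t _; rewrite ?xz_linear ?uz_linear.
Qed.

Definition stacked (n m N : nat) (k : nat -> nat) (w : 'I_N * 'I_m -> R) (t : nat) :
    ('I_m + 'I_n)%type -> R :=
  fun c => match c with inl j => zval w t.+1 j | inr r => @xz n m N k w t r end.

Lemma uz_stacked (n m N : nat) (k : nat -> nat) (A : 'I_n -> 'I_n -> R)
    (w : 'I_N * 'I_m -> R) (t : nat) :
  @uz n m N k A w t = mv (@MIA n m k A) (@stacked n m N k w t).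
Proof.
apply: functional_extensionality => j.
rewrite /uz /mv big_sumType /MIA /stacked /= sumR_delta.
by rewrite /Rminus -sumR_opp; congr (_ + _); apply: eq_bigr => r _ /=; ring.
Qed.

Lemma stacked_energy (n m N : nat) (k : nat -> nat) (w : 'I_N * 'I_m -> R) (t : nat) :
  vnorm (@stacked n m N k w t) ^ 2 =
  vdot (fun j : 'I_m => zval w t.+1 j) (fun j => zval w t.+1 j) + vnorm (@xz n m N k w t) ^ 2.
Proof. by rewrite !vnorm_sq /vdot big_sumType. Qed.

Definition xrow (m N : nat) (k : nat -> nat) (w : 'I_N * 'I_m -> R) (t r : nat) : R :=
  zval w (t + r.+1 - k (blk m k r).+1) (blk m k r).

Lemma xz_energy (n m N : nat) (k : nat -> nat) (w : 'I_N * 'I_m -> R) (t : nat) :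
  vnorm (@xz n m N k w t) ^ 2 = \big[Rplus/0]_(0 <= r < n) xrow k w t r ^ 2.
Proof. by rewrite vnorm_sq big_mkord /vdot /xz /xrow; apply: eq_bigr => r _ /=; ring. Qed.

Section Reparametrization.
Variables (n m N : nat) (k : nat -> nat).
Hypothesis k0 : k 0%N = 0%N.
Hypothesis kinc : forall j, (j < m)%N -> (k j < k j.+1)%N.
Hypothesis km : k m = n.

Local Notation p := (ctrl_index m k).
Local Notation xs z t := (@xz n m N k z t).

Lemma blk_row (r : 'I_n) : (blk m k r < m)%N /\ (k (blk m k r) <= r < k (blk m k r).+1)%N.
Proof. by apply: blk_spec => //; rewrite km. Qed.

(* Each coordinate of w appears at most p times in x_0(w), ..., x_N(w):
   row r of block j carries channel j delayed by k_{j+1} - r - 1. *)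
Lemma x_energy_le (w : 'I_N * 'I_m -> R) :
  \big[Rplus/0]_(0 <= t < N.+1) vnorm (xs w t) ^ 2 <= INR p * vnorm w ^ 2.
Proof.
rewrite vnorm_sq; under eq_bigr do rewrite xz_energy.
rewrite exchange_big /=.
apply: (Rle_trans _ (\big[Rplus/0]_(0 <= r < n) chan_energy w (blk m k r))).
  apply: sumR_le_nat => r Hr; set j := blk m k r.
  have [Hb Hkr] := blk_row (Ordinal (proj2 (andP Hr))); rewrite /= -/j in Hb Hkr.
  have delay t : (t + r.+1 - k j.+1 = t - (k j.+1 - r.+1))%N by lia.
  rewrite /chan_energy /xrow -/j; under eq_bigr do rewrite delay.
  apply: (sumR_delay_le (G := fun t => zval w t j ^ 2)) => [t|]; first nra.
  by rewrite zval_0 /=; ring.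
rewrite -km (sum_blocks kinc k0 _ (leqnn m)) vdot_chan_energy big_distrr /=.
apply: sumR_le_nat => j Hj.
rewrite (eq_big_nat _ _ (F2 := fun _ => chan_energy w j)); last first.
  by move=> r Hr; rewrite (blk_eq kinc (j := j)) //; lia.
rewrite sumR_const_nat; apply: Rmult_le_compat_r; first exact: chan_energy_ge0.
by apply: le_INR; apply/leP; apply: block_size_le; lia.
Qed.

(* Each coordinate w_tau^j appears at least once: in row k_{j+1} of x_tau(w). *)
Lemma x_energy_ge (w : 'I_N * 'I_m -> R) :
  vnorm w ^ 2 <= \big[Rplus/0]_(0 <= t < N.+1) vnorm (xs w t) ^ 2.
Proof.
rewrite vnorm_sq vdot_chan_energy /chan_energy exchange_big.
apply: sumR_le_nat => t Ht.
rewrite xz_energy -km (sum_blocks kinc k0 _ (leqnn m)).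
apply: sumR_le_nat => j Hj.
have Kpos : (k j < k j.+1)%N by apply: kinc; lia.
have -> : k j.+1 = (k j.+1).-1.+1 by lia.
rewrite big_nat_recr /=; last lia.
have -> : xrow k w t (k j.+1).-1 = zval w t j.
  rewrite /xrow (blk_eq kinc (j := j)); try lia.
  by have -> : (t + (k j.+1).-1.+1 - k j.+1 = t)%N by lia.
have : 0 <= \big[Rplus/0]_(k j <= i < (k j.+1).-1) xrow k w t i ^ 2.
  by apply: sumR_ge0 => i _; apply: pow2_ge_0.
by simpl; lra.
Qed.

Lemma u_energy_le (A : 'I_n -> 'I_n -> R) (nM : R) (w : 'I_N * 'I_m -> R) :
  is_opnorm (@MIA n m k A) nM ->
  \big[Rplus/0]_(0 <= t < N) vnorm (@uz n m N k A w t) ^ 2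
    <= (INR p + 1) * nM ^ 2 * vnorm w ^ 2.
Proof.
move=> Hop.
have termwise t : vnorm (@uz n m N k A w t) ^ 2 <=
    nM ^ 2 * (vdot (fun j : 'I_m => zval w t.+1 j) (fun j => zval w t.+1 j)
              + vnorm (xs w t) ^ 2).
  rewrite uz_stacked -stacked_energy.
  have := opnorm_bound Hop (@stacked n m N k w t).
  by have := vnorm_ge0 (mv (MIA k A) (@stacked n m N k w t)); simpl; nra.
apply: Rle_trans; first by apply: sumR_le => t _; apply: termwise.
rewrite -big_distrr big_split vdot_next_inputs -vnorm_sq /=.
have x_energy : \big[Rplus/0]_(0 <= t < N) vnorm (xs w t) ^ 2 <= INR p * vnorm w ^ 2.
  apply: Rle_trans (x_energy_le w); rewrite [X in _ <= X]big_nat_recr //=.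
  by have := pow2_ge_0 (vnorm (xs w N)); lra.
have := pow2_ge_0 nM; simpl in *; nra.
Qed.

Lemma xz_init (z : 'I_N * 'I_m -> R) (r : 'I_n) : xs z 0%N r = 0.
Proof.
have [_ Hkr] := blk_row r.
rewrite /xz; have -> : (0 + r.+1 - k (blk m k r).+1 = 0)%N by lia.
exact: zval_0.
Qed.

Lemma stage_cost_local (A : 'I_n -> 'I_n -> R)
    (f : nat -> ('I_n -> R) -> R) (g : nat -> ('I_m -> R) -> R) (t : nat)
    (z z' : 'I_N * 'I_m -> R) :
  (forall tau j, (t.+1 <= tau + p)%N -> (tau <= t.+1)%N -> zval z tau j = zval z' tau j) ->
  f t (xs z t) + g t (@uz n m N k A z t) = f t (xs z' t) + g t (@uz n m N k A z' t).
Proof.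
move=> Hzz'.
have Ex : xs z t = xs z' t.
  apply: functional_extensionality => r; rewrite /xz.
  have [Hb Hkr] := blk_row r; have := block_size_le k Hb.
  case E: (t + r.+1 - k (blk m k r).+1)%N => [|tau] Hp; first by rewrite !zval_0.
  by rewrite -E; apply: Hzz'; lia.
have Eu : @uz n m N k A z t = @uz n m N k A z' t.
  by apply: functional_extensionality => j; rewrite /uz Ex Hzz' //; lia.
by rewrite Ex Eu.
Qed.

Lemma Ccost_sconvex (A : 'I_n -> 'I_n -> R)
    (f : nat -> ('I_n -> R) -> R) (g : nat -> ('I_m -> R) -> R) (mu : R) :
  0 <= mu ->
  (forall t, (t <= N)%N -> strongly_convex mu (f t)) ->
  (forall t, (t < N)%N -> convex (g t)) ->
  strongly_convex mu (@Ccost n m N k A f g).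
Proof.
move=> mu0 Hf Hg; rewrite CcostE.
have -> : mu = mu * 1 + 0 * 0 by ring.
apply: sconvex_add; apply: sconvex_sum_comp.
- exact: mu0.
- by move=> t Ht; apply: Hf; lia.
- by move=> w; under eq_bigr do rewrite -xz_linear; rewrite Rmult_1_l; apply: x_energy_ge.
- exact: Rle_refl.
- exact: Hg.
- by move=> w; rewrite Rmult_0_l; apply: sumR_ge0 => t _; apply: pow2_ge_0.
Qed.

Lemma Ccost_smooth (A : 'I_n -> 'I_n -> R)
    (f : nat -> ('I_n -> R) -> R) (g : nat -> ('I_m -> R) -> R) (lf lg nM : R) :
  0 <= lf -> 0 <= lg -> is_opnorm (@MIA n m k A) nM ->
  (forall t, (t <= N)%N -> smooth lf (f t)) ->
  (forall t, (t < N)%N -> smooth lg (g t)) ->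
  smooth (INR p * lf + (INR p + 1) * lg * nM ^ 2) (@Ccost n m N k A f g).
Proof.
move=> lf0 lg0 Hop Hf Hg; rewrite CcostE.
have -> : INR p * lf + (INR p + 1) * lg * nM ^ 2 =
          lf * INR p + lg * ((INR p + 1) * nM ^ 2) by ring.
apply: smooth_add; apply: smooth_sum_comp.
- exact: lf0.
- exact: pos_INR.
- by move=> t Ht; apply: Hf; lia.
- by move=> w; under eq_bigr do rewrite -xz_linear; apply: x_energy_le.
- exact: lg0.
- by apply: Rmult_le_pos; [have := pos_INR p; lra|apply: pow2_ge_0].
- exact: Hg.
- by move=> w; under eq_bigr do rewrite -uz_linear; apply: u_energy_le.
Qed.

End Reparametrization.

Lemma Jcost_split (n m N : nat) (f : nat -> ('I_n -> R) -> R) (g : nat -> ('I_m -> R) -> R)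
    (x : nat -> 'I_n -> R) (u : nat -> 'I_m -> R) :
  @Jcost n m N f g x u =
  \big[Rplus/0]_(0 <= t < N.+1) f t (x t) + \big[Rplus/0]_(0 <= t < N) g t (u t).
Proof. by rewrite /Jcost big_split big_nat_recr //=; ring. Qed.

Lemma vat_ord (n : nat) (v : 'I_n -> R) (i : nat) (H : (i < n)%N) : vat v i = v (Ordinal H).
Proof. by rewrite /vat (_ : insub i = Some (Ordinal H)) // -[i]/(val (Ordinal H)) valK. Qed.

Lemma AI_row (n m : nat) (k : nat -> nat) (A : 'I_n -> 'I_n -> R) (x : 'I_n -> R)
    (j : 'I_m) (r : 'I_n) :
  nat_of_ord r = (k j.+1).-1 -> mv (AI k A) x j = mv A x r.
Proof.
move=> Hr; rewrite /mv /AI; apply: eq_bigr => c _.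
by rewrite -Hr (vat_ord _ (ltn_ord r)); congr (A _ c * _); apply: val_inj.
Qed.

Section CanonicalDynamics.
Variables (n m N : nat) (k : nat -> nat).
Variables (A : 'I_n -> 'I_n -> R) (B : 'I_n -> 'I_m -> R).
Hypothesis k0 : k 0%N = 0%N.
Hypothesis kinc : forall j, (j < m)%N -> (k j < k j.+1)%N.
Hypothesis km : k m = n.
Hypothesis hA : forall r c : 'I_n, ~~ in_I m k r ->
  A r c = if (nat_of_ord c == (nat_of_ord r).+1)%N then 1 else 0.
Hypothesis hB : forall (r : 'I_n) (j : 'I_m),
  B r j = if ((nat_of_ord r).+1 == k (nat_of_ord j).+1)%N then 1 else 0.

Local Notation xs z t := (@xz n m N k z t).
Local Notation us z t := (@uz n m N k A z t).

Lemma mvB_in (u : 'I_m -> R) (j : 'I_m) (r : 'I_n) :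
  (nat_of_ord r).+1 = k j.+1 -> mv B u r = u j.
Proof.
move=> Hr; rewrite /mv -(sumR_delta u j); apply: eq_bigr => j' _.
by rewrite hB Hr (k_inj kinc).
Qed.

Lemma mvB_out (u : 'I_m -> R) (r : 'I_n) : ~~ in_I m k r -> mv B u r = 0.
Proof.
move=> Hr; rewrite /mv big1 // => j _; rewrite hB.
case: eqP => [E|_]; last by ring.
case/negP: Hr; apply/in_IP; exists j.+1; split => //.
by have := ltn_ord j; lia.
Qed.

Lemma mvA_shift (x : 'I_n -> R) (r : 'I_n) (H : ((nat_of_ord r).+1 < n)%N) :
  ~~ in_I m k r -> mv A x r = x (Ordinal H).
Proof.
move=> Hr; rewrite /mv -(sumR_delta x (Ordinal H)); apply: eq_bigr => c _.
by rewrite hA // -val_eqE /= eq_sym.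
Qed.

Lemma last_row_lt (j : nat) : (j < m)%N -> ((k j.+1).-1 < n)%N.
Proof. by move=> Hj; have := @k_mono _ _ kinc j.+1 m ltac:(lia); have := kinc Hj; lia. Qed.

Lemma xz_step (z : 'I_N * 'I_m -> R) (t : nat) (r : 'I_n) :
  xs z t.+1 r = mv A (xs z t) r + mv B (us z t) r.
Proof.
have [Hb Hkr] := blk_spec kinc k0 (r := r) ltac:(rewrite km; exact: ltn_ord).
case HI: (in_I m k r).
  have [j0 [Hj0 Ej0]] := in_IP _ _ _ HI.
  have Hj : (j0.-1 < m)%N by lia.
  set j := Ordinal Hj.
  have Ej : (nat_of_ord r).+1 = k j.+1 by rewrite /= prednK; lia.
  have Eb : blk m k r = j by apply: (blk_eq kinc Hj); have := kinc Hj; rewrite /= in Ej *; lia.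
  rewrite (mvB_in _ Ej) /uz (@AI_row n m k A _ j r); last by rewrite /= -Ej.
  rewrite /xz Eb -Ej.
  have -> : (t.+1 + (nat_of_ord r).+1 - (nat_of_ord r).+1 = t.+1)%N by lia.
  by ring.
have Hne : ((nat_of_ord r).+1 != k (blk m k r).+1)%N.
  apply/eqP => E; move/negP: HI; apply; apply/in_IP.
  by exists (blk m k r).+1; split => //; lia.
have Hr1 : ((nat_of_ord r).+1 < n)%N.
  by have := @k_mono _ _ kinc (blk m k r).+1 m ltac:(lia); lia.
rewrite (mvB_out _ (negbT HI)) Rplus_0_r (mvA_shift _ Hr1 (negbT HI)) /xz /=.
have -> : blk m k (nat_of_ord r).+1 = blk m k r by apply: (blk_eq kinc Hb); lia.
by have -> : (t + (nat_of_ord r).+2 = t.+1 + (nat_of_ord r).+1)%N by lia.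
Qed.

Section Trajectory.
Variables (x : nat -> 'I_n -> R) (u : nat -> 'I_m -> R).
Hypothesis x_init : forall r, x 0%N r = 0.
Hypothesis x_dyn : forall t, (t < N)%N -> forall r, x t.+1 r = mv A (x t) r + mv B (u t) r.

Lemma traj_delay (d t : nat) (r : 'I_n) (j : nat) (rj : 'I_n) :
  (j < m)%N -> (t <= N)%N -> (k j <= r)%N -> ((nat_of_ord r).+1 <= k j.+1)%N ->
  (k j.+1 - (nat_of_ord r).+1)%N = d -> nat_of_ord rj = (k j.+1).-1 ->
  x t r = if (t <= d)%N then 0 else x (t - d)%N rj.
Proof.
elim: d t r => [|d IH] t r Hj Ht Hr1 Hr2 Hd Hrj.
  have -> : r = rj by apply: ord_inj; rewrite Hrj; lia.
  by case: t Ht => [|t] Ht; rewrite ?x_init ?subn0.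
case: t Ht => [|t] Ht; first by rewrite x_init.
have Hr1' : ((nat_of_ord r).+1 < n)%N.
  by have := @k_mono _ _ kinc j.+1 m ltac:(lia); lia.
have HI : ~~ in_I m k r by apply: (notin_I kinc Hj); lia.
rewrite x_dyn; last lia.
rewrite (mvB_out _ HI) Rplus_0_r (mvA_shift _ Hr1' HI).
by rewrite (IH t (Ordinal Hr1')) //=; lia.
Qed.

Lemma xz_traj (t : nat) (r : 'I_n) : (t <= N)%N -> xs (@zI n m N k x) t r = x t r.
Proof.
move=> Ht.
have [Hb Hkr] := blk_spec kinc k0 (r := r) ltac:(rewrite km; exact: ltn_ord).
set j := blk m k r in Hb Hkr *.
have Hrj := last_row_lt Hb.
rewrite (@traj_delay (k j.+1 - (nat_of_ord r).+1) t r j (Ordinal Hrj)) //; try lia.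
rewrite /xz -/j; case: leqP => Htd.
  have -> : (t + (nat_of_ord r).+1 - k j.+1 = 0)%N by lia.
  exact: zval_0.
have Ha : ((t - (k j.+1 - (nat_of_ord r).+1)).-1 < N)%N by lia.
have -> : (t + (nat_of_ord r).+1 - k j.+1)%N = (Ordinal Ha).+1 by rewrite /=; lia.
rewrite (zval_ord _ (Ordinal Ha) (Ordinal Hb)) /zI /restrI /= (vat_ord _ Hrj).
by rewrite prednK //; lia.
Qed.

Lemma uz_traj (t : nat) (j : 'I_m) : (t < N)%N -> us (@zI n m N k x) t j = u t j.
Proof.
move=> Ht; have Hrj := last_row_lt (ltn_ord j).
have Ekj : (Ordinal Hrj).+1 = k j.+1 by rewrite /= prednK //; have := kinc (ltn_ord j); lia.
have Ex : xs (@zI n m N k x) t = x t.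
  by apply: functional_extensionality => r; apply: xz_traj; lia.
rewrite /uz Ex (zval_ord _ (Ordinal Ht) j) /zI /restrI /= (vat_ord _ Hrj).
rewrite (@AI_row n m k A _ j (Ordinal Hrj)) // x_dyn // (mvB_in _ Ekj).
by ring.
Qed.

Lemma Ccost_traj (f : nat -> ('I_n -> R) -> R) (g : nat -> ('I_m -> R) -> R) :
  @Ccost n m N k A f g (@zI n m N k x) = @Jcost n m N f g x u.
Proof.
rewrite Jcost_split /Ccost; congr (_ + _); apply: eq_big_nat => t Ht.
  by congr (f t _); apply: functional_extensionality => r; apply: xz_traj; lia.
by congr (g t _); apply: functional_extensionality => j; apply: uz_traj; lia.
Qed.

End Trajectory.

End CanonicalDynamics.

Theorem lemma1 (n m N : nat) (k : nat -> nat)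
    (A : 'I_n -> 'I_n -> R) (B : 'I_n -> 'I_m -> R)
    (f : nat -> ('I_n -> R) -> R) (g : nat -> ('I_m -> R) -> R)
    (mu lf lg thbar xibar : R)
    (theta : nat -> 'I_n -> R) (xi : nat -> 'I_m -> R) :
  @canonical_form n m k A B ->
  0 < mu -> 0 < lf -> 0 < lg ->
  (forall t, (t <= N)%N -> strongly_convex mu (f t) /\ smooth lf (f t)) ->
  (forall t, (t < N)%N -> convex (g t) /\ smooth lg (g t)) ->
  (forall t, (t <= N)%N ->
      (forall x, f t (theta t) <= f t x) /\ vnorm (theta t) <= thbar) ->
  (forall t, (t < N)%N ->
      (forall v, g t (xi t) <= g t v) /\ vnorm (xi t) <= xibar) ->
  let p := ctrl_index m k in
  let C := @Ccost n m N k A f g in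
  (* (i) *)
  (strongly_convex mu C /\
   (forall nM, is_opnorm (@MIA n m k A) nM ->
      smooth (INR p * lf + (INR p + 1) * lg * nM ^ 2) C)) /\
  (* (ii) forward *)
  (forall (x : nat -> 'I_n -> R) (u : nat -> 'I_m -> R),
      (forall r, x 0%N r = 0) ->
      (forall t, (t < N)%N -> forall r, x t.+1 r = mv A (x t) r + mv B (u t) r) ->
      let z := @zI n m N k x in
      (forall t, (t <= N)%N -> forall r, @xz n m N k z t r = x t r) /\
      (forall t, (t < N)%N -> forall j, @uz n m N k A z t j = u t j) /\
      C z = @Jcost n m N f g x u) /\
  (* (ii) converse *)
  (forall z : 'I_N * 'I_m -> R,
      (forall r, @xz n m N k z 0%N r = 0) /\
      (forall t, (t < N)%N -> forall r,
          @xz n m N k z t.+1 r = mv A (@xz n m N k z t) r + mv B (@uz n m N k A z t) r) /\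
      @Jcost n m N f g (@xz n m N k z) (@uz n m N k A z) = C z) /\
  (* (iii) *)
  (forall t, (t < N)%N -> forall z z' : 'I_N * 'I_m -> R,
      (forall tau j, (t.+1 <= tau + p)%N -> (tau <= t.+1)%N ->
          zval z tau j = zval z' tau j) ->
      f t (@xz n m N k z t) + g t (@uz n m N k A z t) = f t (@xz n m N k z' t) + g t (@uz n m N k A z' t)).
Proof.
case=> k0 kinc km hA hB mu0 lf0 lg0 Hf Hg _ _ p C.
split; [split|split; [|split]].
- apply: Ccost_sconvex => //; first lra.
    by move=> t /Hf [].
  by move=> t /Hg [].
- move=> nM Hop; apply: Ccost_smooth => //; try lra.
    by move=> t /Hf [].
  by move=> t /Hg [].
- move=> x u x_init x_dyn z; split; [|split].
  + by move=> t Ht r; apply: (xz_traj k0 kinc km hA hB x_init x_dyn).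
  + by move=> t Ht j; apply: (uz_traj k0 kinc km hA hB x_init x_dyn).
  + exact: (Ccost_traj k0 kinc km hA hB x_init x_dyn).
- move=> z; split; [|split].
  + exact: xz_init.
  + by move=> t _ r; apply: (xz_step k0 kinc km hA hB).
  + by rewrite Jcost_split.
- by move=> t _ z z'; apply: stage_cost_local.
Qed.
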